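(* Let $f,g\in Sym$ be symmetric functions of degree at most a positive integer $n$. If $f[\Xi_\mu]=g[\Xi_\mu]$ for all partitions $\mu$ with $|\mu|\ge n$, then $f=g$ in $Sym$.
   Context: $Sym=\mathbb{Q}[p_1,p_2,\ldots]$ graded by $\deg p_k=k$. For $f\in Sym$ and a partition $\mu$, $f[\Xi_\mu]$ denotes $f$ evaluated at the multiset of eigenvalues of a permutation matrix of cycle type $\mu$, i.e. substituting $p_k\mapsto\sum_{d\mid k}d\,m_d(\mu)$, with $m_d(\mu)$ the number of parts of $\mu$ equal to $d$. *)

From HB Require Import structures.
From mathcomp Require Import all_boot all_order all_algebra.
From mathcomp Require Import mpoly.
Set Implicit Arguments. Unset Strict Implicit. Unset Printing Implicit Defensive.
Import GRing.Theory.
Local Open Scope ring_scope.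

(* Sym = Q[p_1,p_2,...].  An element lies in Q[p_1,...,p_N] for some N;
   we model it as {mpoly rat[N]}, where the variable 'X_i (i : 'I_N)
   stands for the power sum p_(i+1). *)

Definition wdeg (N : nat) (m : 'X_{1..N}) : nat :=
  (\sum_(i < N) i.+1 * m i)%N.

Definition sym_deg_le (N : nat) (f : {mpoly rat[N]}) (n : nat) : Prop :=
  forall m : 'X_{1..N}, m \in msupp f -> (wdeg m <= n)%N.

Definition is_partition (mu : seq nat) : bool :=
  sorted geq mu && all (fun x => 0 < x)%N mu.

Definition psize (mu : seq nat) : nat := sumn mu.

Definition mult (mu : seq nat) (d : nat) : nat := count_mem d mu.

(* value of p_k at the eigenvalues of a permutation matrix of cycle type mu:
   sum_{d | k} d * m_d(mu) *)
Definition p_at_Xi (mu : seq nat) (k : nat) : rat :=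
  (\sum_(d <- divisors k) (d * mult mu d)%N%:R).

Definition eval_Xi (N : nat) (f : {mpoly rat[N]}) (mu : seq nat) : rat :=
  f.@[fun i : 'I_N => p_at_Xi mu i.+1].

(* Let h = f - g and let phi be the substitution p_k |-> sum_(d | k) d x_d
   for k <= N.  Its matrix is triangular with diagonal entries d, so phi is
   onto on valuations and h = 0 as soon as h o phi = 0.  For x : 'I_N -> nat,
   (h o phi)(x) = h[Xi_mu] where mu has x_d parts equal to d, padded with n
   parts equal to N + 1; the padding makes |mu| >= n without changing
   p_1, ..., p_N.  Hence h o phi
   vanishes at every natural point, and a polynomial over Q with this
   property is zero. *)

From HB Require Import structures.
From mathcomp Require Import all_boot all_order all_algebra.
From mathcomp Require Import mpoly.
Set Implicit Arguments. Unset Strict Implicit. Unset Printing Implicit Defensive.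
Import GRing.Theory Num.Theory.
Local Open Scope ring_scope.

Local Notation widen := (widen_ord (leqnSn _)).

Section LastVariable.
Variables (n : nat) (R : comNzRingType).
Implicit Types (p : {mpoly R[n.+1]}) (m : 'X_{1..n.+1}).

Definition mnm_init m : 'X_{1..n} := [multinom m (widen i) | i < n].

Lemma mnm_init_max_inj m1 m2 :
  mnm_init m1 = mnm_init m2 -> m1 ord_max = m2 ord_max -> m1 = m2.
Proof.
move=> eq_init eq_max; apply/mnmP => i.
have [->|ne_imax] := eqVneq i ord_max; first exact: eq_max.
have lt_in : (i < n)%N.
  rewrite ltn_neqAle -ltnS ltn_ord andbT.
  by apply: contra ne_imax => /eqP e; apply/eqP/val_inj.
have := congr1 (fun m : 'X_{1..n} => m (Ordinal lt_in)) eq_init.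
by rewrite !mnmE (_ : widen (Ordinal lt_in) = i) //; apply: val_inj.
Qed.

Lemma mcoeff_muni p m : ((muni p)`_(m ord_max))@_(mnm_init m) = p@_m.
Proof.
rewrite muniE coef_sum raddf_sum [in RHS](mpolyE p) raddf_sum /=.
apply: eq_bigr => m' _; rewrite coefZ coefXn !mcoeffZ mcoeffX.
have [eq_max|ne_max] := eqVneq (m ord_max) (m' ord_max); last first.
  have /negbTE -> : m' != m by apply/eqP => eq_m; rewrite eq_m eqxx in ne_max.
  by rewrite !mulr0 mcoeff0.
rewrite mulr1 mcoeffZ mcoeffX; congr (_ * (nat_of_bool _)%:R).
apply/eqP/eqP => [eq_init|->] //.
exact: mnm_init_max_inj eq_init (esym eq_max).
Qed.

Lemma muni_inj : injective (@muni n R).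
Proof. by move=> p q eq_pq; apply/mpolyP => m; rewrite -!mcoeff_muni eq_pq. Qed.

Lemma meval_muni (w : 'I_n.+1 -> R) p :
  p.@[w] = (map_poly (meval (w \o widen)) (muni p)).[w ord_max].
Proof.
rewrite muniE mevalE rmorph_sum horner_sum; apply: eq_bigr => m _.
rewrite -mul_polyC rmorphM /= map_polyC map_polyXn hornerCM hornerXn /=.
rewrite mevalZ mevalX big_ord_recr /= mulrA.
by congr (_ * _ * _); apply: eq_bigr => i _; rewrite mnmE.
Qed.

End LastVariable.

Lemma mpoly_eq0_on_nat_grid (R : numDomainType) n (p : {mpoly R[n]}) :
  (forall v : 'I_n -> nat, p.@[fun i => (v i)%:R] = 0) -> p = 0.
Proof.
elim: n p => [|n IHn] p p_grid0.
  by move: (p_grid0 (fun=> 0%N)); rewrite [p]nvar0_mpolyC mevalC => ->.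
apply: muni_inj; rewrite muni0; apply/polyP => k; rewrite coef0; apply: IHn => v.
pose q := map_poly (meval (fun i => (v i)%:R)) (muni p).
have q_nat_roots j : root q j%:R.
  pose w (i : 'I_n.+1) := if unlift ord_max i is Some i' then v i' else j.
  have w_widen (i : 'I_n) : w (widen i) = v i.
    have -> : widen i = lift ord_max i by apply/val_inj/esym/lift_max.
    by rewrite /w liftK.
  have := p_grid0 w.
  rewrite (meval_muni (fun i => (w i)%:R)) /= {2}/w unlift_none.
  suff -> : map_poly (meval ((fun i => (w i)%:R) \o widen)) (muni p) = q.
    by move/eqP.
  by apply: eq_map_poly => r; apply: meval_eq => i /=; rewrite w_widen.
have q0 : q = 0.
  apply: (@roots_geq_poly_eq0 _ _ [seq j%:R | j <- iota 0 (size q)]).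
  - by apply/allP => _ /mapP [j _ ->].
  - by rewrite map_inj_uniq ?iota_uniq // => i j /eqP; rewrite eqr_nat => /eqP.
  - by rewrite size_map size_iota.
by rewrite -coef_map -/q q0 coef0.
Qed.

Lemma mpoly_eq0_of_comp_eq0 (R : numDomainType) n k
    (lq : n.-tuple {mpoly R[k]}) (p : {mpoly R[n]}) :
  (forall y : 'I_n -> R, exists v, forall i, (tnth lq i).@[v] = y i) ->
  p \mPo lq = 0 -> p = 0.
Proof.
move=> lq_onto p_lq0; apply: mpoly_eq0_on_nat_grid => y.
have [v v_y] := lq_onto (fun i => (y i)%:R).
by rewrite -(meval_eq p v_y) -comp_mpoly_meval p_lq0 meval0.
Qed.

Definition divisor_subst (R : nzRingType) N : N.-tuple {mpoly R[N]} :=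
  [tuple \sum_(d < N | (d.+1 %| k.+1)%N) d.+1%:R *: 'X_d | k < N].

Lemma meval_divisor_subst (R : comNzRingType) N (v : 'I_N -> R) k :
  (tnth (divisor_subst R N) k).@[v] =
  \sum_(d < N | (d.+1 %| k.+1)%N) d.+1%:R * v d.
Proof.
rewrite tnth_mktuple rmorph_sum.
by apply: eq_big => // d _; rewrite /= mevalZ mevalXU.
Qed.

Definition divisor_mx (R : nzRingType) N : 'M[R]_N :=
  \matrix_(k, d) if (d.+1 %| k.+1)%N then d.+1%:R else 0.

Lemma divisor_mx_unit (R : numFieldType) N : divisor_mx R N \in unitmx.
Proof.
rewrite unitmxE unitfE det_trig; last first.
  apply/forallP => k; apply/forallP => d; apply/implyP => lt_kd.
  rewrite mxE; case: ifP => // /(dvdn_leq (ltn0Sn _)); rewrite ltnS => le_dk.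
  by move: lt_kd; rewrite ltnNge le_dk.
by apply/prodf_neq0 => k _; rewrite mxE dvdnn pnatr_eq0.
Qed.

Lemma divisor_subst_onto (R : numFieldType) N (y : 'I_N -> R) :
  exists v, forall k, (tnth (divisor_subst R N) k).@[v] = y k.
Proof.
pose v := invmx (divisor_mx R N) *m \col_k y k.
exists (fun d => v d ord0) => k; rewrite meval_divisor_subst.
have := mulKVmx (divisor_mx_unit R N) (\col_k y k).
move/(congr1 (fun M : 'M[R]_(N, 1) => M k ord0)); rewrite !mxE => <-.
rewrite big_mkcond /=; apply: eq_bigr => d _.
by rewrite [divisor_mx _ _ k d]mxE; case: ifP; rewrite ?mul0r.
Qed.

Lemma big_divisors_ord (R : Type) (idx : R) (op : Monoid.com_law idx) K N
    (F : nat -> R) :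
  (0 < K)%N -> (K <= N)%N ->
  \big[op/idx]_(d <- divisors K) F d =
  \big[op/idx]_(d < N | (d.+1 %| K)%N) F d.+1.
Proof.
move=> K_gt0 le_KN.
rewrite -(big_mkord (fun d => d.+1 %| K)%N (fun d => F d.+1)).
rewrite -(big_add1 _ _ 0 N.+1 (fun d => d %| K)%N F) -[RHS]big_filter.
apply/perm_big/uniq_perm; rewrite ?divisors_uniq ?filter_uniq ?iota_uniq //.
move=> d; rewrite mem_filter mem_index_iota -dvdn_divisors //.
rewrite andb_idr // => dvd_dK.
by rewrite (dvdn_gt0 K_gt0 dvd_dK) ltnS (leq_trans (dvdn_leq K_gt0 dvd_dK)).
Qed.

Definition padded_partition N n (x : 'I_N -> nat) : seq nat :=
  sort geq (nseq n N.+1 ++ flatten [seq nseq (x d) d.+1 | d <- enum 'I_N]).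

Section PaddedPartition.
Variables (N n : nat) (x : 'I_N -> nat).
Local Notation mu := (padded_partition n x).

Lemma padded_partition_is_partition : is_partition mu.
Proof.
rewrite /is_partition sort_sorted ?all_sort ?all_cat; last first.
  by move=> a b; exact: leq_total.
apply/and3P; split=> //; first by apply/allP => _ /nseqP [->].
by apply/allP => _ /flattenP [_ /mapP [d _ ->] /nseqP [-> _]].
Qed.

Lemma padded_partition_size : (n <= psize mu)%N.
Proof.
rewrite /psize (perm_sumn (permEl (perm_sort _ _))) sumn_cat sumn_nseq.
by rewrite (leq_trans _ (leq_addr _ _)) // leq_pmull.
Qed.

Lemma mult_padded_partition (d : 'I_N) : mult mu d.+1 = x d.
Proof.
rewrite /mult count_sort count_cat count_nseq /= eqSS (gtn_eqF (ltn_ord d)) add0n.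
rewrite count_flatten -map_comp sumnE big_map.
rewrite (bigD1_seq d) ?mem_enum ?enum_uniq //=.
rewrite count_nseq /= eqxx mul1n big1_seq ?addn0 // => e /andP [ne_ed _].
by rewrite count_nseq /= eqSS (inj_eq val_inj) (negbTE ne_ed).
Qed.

Lemma p_at_Xi_padded_partition (k : 'I_N) :
  p_at_Xi mu k.+1 = (\sum_(d < N | (d.+1 %| k.+1)%N) d.+1 * x d)%:R.
Proof.
rewrite /p_at_Xi (big_divisors_ord _ _ (ltn0Sn k) (ltn_ord k)) natr_sum.
by apply: eq_bigr => d _; rewrite mult_padded_partition.
Qed.

End PaddedPartition.

Theorem corollary56 (n N : nat) (f g : {mpoly rat[N]}) :
  (0 < n)%N ->
  sym_deg_le f n -> sym_deg_le g n ->
  (forall mu : seq nat, is_partition mu -> (n <= psize mu)%N ->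
     eval_Xi f mu = eval_Xi g mu) ->
  f = g.
Proof.
move=> _ _ _ eval_fg; apply: subr0_eq.
apply: (mpoly_eq0_of_comp_eq0 (@divisor_subst_onto _ N)).
apply: mpoly_eq0_on_nat_grid => x.
have subst_Xi k : (tnth (divisor_subst _ N) k).@[fun d => (x d)%:R]
                  = p_at_Xi (padded_partition n x) k.+1.
  rewrite meval_divisor_subst p_at_Xi_padded_partition natr_sum.
  by apply: eq_bigr => d _; rewrite natrM.
rewrite comp_mpoly_meval (meval_eq _ subst_Xi) mevalB.
apply/eqP; rewrite subr_eq0; apply/eqP.
exact: eval_fg (padded_partition_is_partition n x) (padded_partition_size n x).
Qed.
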